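(* Fix $i\in\{1,\dots,d\}$ and let $0\le\alpha\le 1/h_i$ and $0\le\beta\le 2/h_i-\alpha$. Then for all $n\ge1$, $$(\eta_n^i)^2\le\min\Big\{\frac{2(\eta_1^i)^2}{\alpha h_i},\ \frac{8(\eta_1^i)^2\,n}{(\alpha+\beta)h_i},\ \frac{16(\eta_1^i)^2}{(\alpha+\beta)^2h_i^2}\Big\},$$ where a term with zero denominator is interpreted as $+\infty$.
   Context: Let $H\in\mathbb{R}^{d\times d}$ be symmetric positive definite with eigenvalues $h_1\le\dots\le h_d$ (all $>0$) and orthonormal eigenvectors $p_1,\dots,p_d$. Let $q\in\mathbb{R}^d$, $\theta_*=H^{-1}q$. For parameters $\alpha,\beta$, given $\theta_0$, set $\theta_1=\theta_0$ and for $n\ge1$ $\theta_{n+1}=\frac{2n}{n+1}\theta_n-\frac{n-1}{n+1}\theta_{n-1}-\frac{1}{n+1}\big(n(\alpha+\beta)H(\theta_n-\theta_* )-(n-1)\beta H(\theta_{n-1}-\theta_* )\big)$. Let $\eta_n=n(\theta_n-\theta_* )$, so that $\eta_0=0$, $\eta_1=\theta_0-\theta_*$ and $\eta_{n+1}=(I-\alpha H)\eta_n+(I-\beta H)(\eta_n-\eta_{n-1})$; write $\eta_n^i=p_i^\top\eta_n$. *)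

(* the statement is purely algebraic; we state it over an
   arbitrary real field R. *)
From HB Require Import structures.
From mathcomp Require Import all_boot all_order all_algebra.
Set Implicit Arguments. Unset Strict Implicit. Unset Printing Implicit Defensive.
Import Order.TTheory GRing.Theory Num.Theory.
Local Open Scope ring_scope.

Definition theta_step (R : realFieldType) (d : nat) (H : 'M[R]_d)
    (thstar : 'cV[R]_d) (alpha beta : R) (m : nat)
    (thm thm1 : 'cV[R]_d) : 'cV[R]_d :=
  ((2 * m%:R) / (m.+1)%:R) *: thm
  - ((m.-1)%:R / (m.+1)%:R) *: thm1
  - (1 / (m.+1)%:R) *:
      ((m%:R * (alpha + beta)) *: (H *m (thm - thstar))
       - ((m.-1)%:R * beta) *: (H *m (thm1 - thstar))).

(* theta_pair n = (theta_n, theta_{n+1}), with theta_1 = theta_0. *)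
Fixpoint theta_pair (R : realFieldType) (d : nat) (H : 'M[R]_d)
    (thstar : 'cV[R]_d) (alpha beta : R) (theta0 : 'cV[R]_d) (n : nat)
    : 'cV[R]_d * 'cV[R]_d :=
  match n with
  | 0 => (theta0, theta0)
  | k.+1 => let p := theta_pair H thstar alpha beta theta0 k in
            (p.2, theta_step H thstar alpha beta k.+1 p.2 p.1)
  end.

Definition theta (R : realFieldType) (d : nat) (H : 'M[R]_d)
    (thstar : 'cV[R]_d) (alpha beta : R) (theta0 : 'cV[R]_d) (n : nat)
    : 'cV[R]_d :=
  (theta_pair H thstar alpha beta theta0 n).1.

Definition eta (R : realFieldType) (d : nat) (H : 'M[R]_d)
    (thstar : 'cV[R]_d) (alpha beta : R) (theta0 : 'cV[R]_d) (n : nat)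
    : 'cV[R]_d :=
  n%:R *: (theta H thstar alpha beta theta0 n - thstar).

Definition eta_coord (R : realFieldType) (d : nat) (H P : 'M[R]_d)
    (thstar : 'cV[R]_d) (alpha beta : R) (theta0 : 'cV[R]_d) (i : 'I_d)
    (n : nat) : R :=
  ((col i P)^T *m eta H thstar alpha beta theta0 n) 0 0.

(* Projecting the recursion on the eigenvector p_i gives a scalar sequence
   x_n = eta_n^i with x_0 = 0 and x_(n+2) = (2 - a - b) x_(n+1) - (1 - b) x_n,
   where a = alpha h_i lies in [0, 1] and b = beta h_i in [0, 2 - a].
   The quantity x_(n+1)^2 - (2 - a - b) x_(n+1) x_n + (1 - b) x_n^2 equals
   (1 - b)^n x_1^2, and three quadratic forms in (x_n, x_(n+1)) do not increase
   along the recursion.  They give a x_n^2 <= 2 x_1^2, then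
   ((a + b)^2 - 4 a) x_n^2 <= 4 x_1^2 when the characteristic roots are real,
   and, for b <= 1, (x_(n+1) - x_n)^2 <= 2 x_1^2, so that x_n grows at most
   linearly.  Comparing (a + b)^2 with 8 a yields the bound in 1/(a + b)^2,
   and comparing n (a + b) with 2 the bound in n/(a + b). *)

From HB Require Import structures.
From mathcomp Require Import all_boot all_order all_algebra.
From mathcomp Require Import ring lra.
Set Implicit Arguments. Unset Strict Implicit. Unset Printing Implicit Defensive.
Import Order.TTheory GRing.Theory Num.Theory.
Local Open Scope ring_scope.

Section QuadraticForms.
Variable R : realFieldType.

Definition qform (A B C v u : R) := A * v ^+ 2 + 2 * B * v * u + C * u ^+ 2.

Lemma qform_complete_square (A B C v u : R) :
  A * qform A B C v u = (A * v + B * u) ^+ 2 + (A * C - B ^+ 2) * u ^+ 2.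
Proof. rewrite /qform; ring. Qed.

Lemma qform_ge0 (A B C v u : R) : 0 <= A -> 0 <= C -> B ^+ 2 <= A * C ->
  0 <= qform A B C v u.
Proof.
move=> A_ge0 C_ge0; have [->|A_neq0] := eqVneq A 0 => disc_le.
  rewrite mul0r in disc_le.
  have /eqP : B ^+ 2 = 0 by apply/le_anti; rewrite disc_le sqr_ge0.
  rewrite sqrf_eq0 => /eqP ->; rewrite /qform; have := sqr_ge0 u; nra.
have A_gt0 : 0 < A by rewrite lt_def A_neq0.
rewrite -(pmulr_rge0 (qform A B C v u) A_gt0) qform_complete_square.
by apply: addr_ge0; rewrite ?sqr_ge0 // mulr_ge0 ?sqr_ge0 ?subr_ge0.
Qed.

Lemma qform_le_disc (A B C v u K : R) : 0 < A -> qform A B C v u <= K ->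
  (A * C - B ^+ 2) * u ^+ 2 <= A * K.
Proof.
move=> A_gt0; rewrite -(ler_pM2l A_gt0) qform_complete_square.
by have := sqr_ge0 (A * v + B * u); lra.
Qed.

Lemma lyapunov_le_init (F : R -> R -> R) (c r : R) (x : nat -> R) :
  (forall n, x n.+2 = c * x n.+1 - r * x n) ->
  (forall v u, F u (c * u - r * v) <= F v u) ->
  forall n, F (x n) (x n.+1) <= F (x 0) (x 1).
Proof. by move=> xS F_step; elim=> // n /(le_trans _); apply; rewrite xS. Qed.

Lemma sqr_addr_le (X Y M N : R) : 0 <= N -> 0 <= M ->
  X ^+ 2 <= N ^+ 2 * M -> Y ^+ 2 <= M -> (X + Y) ^+ 2 <= (N + 1) ^+ 2 * M.
Proof.
move=> N_ge0 M_ge0; have [->|N_neq0] := eqVneq N 0 => X_le Y_le.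
  rewrite expr0n mul0r in X_le.
  have /eqP : X ^+ 2 = 0 by apply/le_anti; rewrite X_le sqr_ge0.
  by rewrite sqrf_eq0 => /eqP ->; rewrite !add0r expr1n mul1r.
have N_gt0 : 0 < N by rewrite lt_def N_neq0.
have XY_le : X * Y <= N * M.
  rewrite -(ler_pM2l N_gt0).
  have := sqr_ge0 (X - N * Y); have := ler_wpM2l (sqr_ge0 N) Y_le; nra.
nra.
Qed.

End QuadraticForms.

Section TwoStepRecurrence.
Variables (R : realFieldType) (a b : R) (x : nat -> R).
Hypotheses (x0 : x 0 = 0)
  (xS : forall n, x n.+2 = (2 - a - b) * x n.+1 - (1 - b) * x n)
  (a_ge0 : 0 <= a) (a_le1 : a <= 1) (b_ge0 : 0 <= b) (b_le : b <= 2 - a).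

Local Notation c := (2 - a - b).
Local Notation r := (1 - b).

(* [lra] ignores section hypotheses; this copies them into the goal context. *)
Local Ltac ab_range :=
  have := a_ge0; have := a_le1; have := b_ge0; have := b_le; move=> ? ? ? ?.

Lemma invariantE n :
  x n.+1 ^+ 2 - c * x n.+1 * x n + r * x n ^+ 2 = r ^+ n * x 1 ^+ 2.
Proof.
elim: n => [|n IHn]; first by rewrite x0; ring.
by rewrite [r ^+ _]exprS -[RHS]mulrA -IHn xS; ring.
Qed.

Lemma invariant_le n :
  `|x n.+1 ^+ 2 - c * x n.+1 * x n + r * x n ^+ 2| <= x 1 ^+ 2.
Proof.
rewrite invariantE normrM normrX (ger0_norm (sqr_ge0 _)).
apply: ler_piMl; rewrite ?sqr_ge0 // exprn_ile1 // ler_norml.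
by ab_range; apply/andP; split; lra.
Qed.

Definition lyap_a (v u : R) := qform (2 - b - c ^+ 2 * b) (- (r * c)) (2 - b) v u.

Lemma lyap_a_step (v u : R) : lyap_a u (c * u - r * v) <= lyap_a v u.
Proof.
have -> : lyap_a u (c * u - r * v)
    = lyap_a v u - b * a * (2 * (2 - b) - a) * v ^+ 2.
  by rewrite /lyap_a /qform; ring.
rewrite lerBlDr lerDl mulr_ge0 ?sqr_ge0 // !mulr_ge0 //; ab_range; lra.
Qed.

Lemma lyap_a_lead_gt0 : 0 < a -> 0 < 2 - b - c ^+ 2 * b.
Proof.
move=> a_gt0; ab_range.
have -> : 2 - b - c ^+ 2 * b = (2 - b) * r ^+ 2 + b * (a * (2 * (2 - b) - a)).
  by ring.
have [->|b_neq0] := eqVneq b 0; first by rewrite !subr0 expr1n mul0r; lra.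
have b_gt0 : 0 < b by rewrite lt_def b_neq0.
have : 0 <= (2 - b) * r ^+ 2 by rewrite mulr_ge0 ?sqr_ge0 // subr_ge0; lra.
have : 0 < b * (a * (2 * (2 - b) - a)) by rewrite !mulr_gt0 // subr_gt0; lra.
lra.
Qed.

Lemma lyap_a_disc_ge :
  a * (2 - b) * (2 - b - c ^+ 2 * b)
    <= 2 * ((2 - b - c ^+ 2 * b) * (2 - b) - (r * c) ^+ 2).
Proof.
ab_range; rewrite -subr_ge0.
pose t := 2 - b.
have t_ge_a : a <= t by rewrite /t; lra.
have t_le2 : t <= 2 by rewrite /t; lra.
have -> : 2 * ((t - c ^+ 2 * b) * t - (r * c) ^+ 2) - a * t * (t - c ^+ 2 * b)
    = a * (t * (2 - t) + (t - a) *
       ((1 - t) ^+ 2 + 1 + t ^+ 2 * (2 - t) + (1 - a) * t * (2 - t))).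
  by rewrite /t; ring.
have t_ge0 : 0 <= t by lra.
have two_sub_t_ge0 : 0 <= 2 - t by lra.
have one_sub_a_ge0 : 0 <= 1 - a by lra.
have := mulr_ge0 (sqr_ge0 t) two_sub_t_ge0.
have := mulr_ge0 (mulr_ge0 one_sub_a_ge0 t_ge0) two_sub_t_ge0.
have := sqr_ge0 (1 - t).
have := mulr_ge0 t_ge0 two_sub_t_ge0 => ? ? ? ?.
by apply: mulr_ge0 => //; apply: addr_ge0 => //; apply: mulr_ge0; lra.
Qed.

Lemma sqr_le_a n : a * x n ^+ 2 <= 2 * x 1 ^+ 2.
Proof.
have x1_ge0 := sqr_ge0 (x 1).
have [->|a_neq0] := eqVneq a 0; first by rewrite mul0r mulr_ge0.
have a_gt0 : 0 < a by rewrite lt_def a_neq0.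
case: n => [|n]; first by rewrite x0 expr0n mulr0 mulr_ge0.
have := qform_le_disc (lyap_a_lead_gt0 a_gt0) (lyapunov_le_init xS lyap_a_step n).
rewrite /lyap_a x0 /qform sqrrN.
have := lyap_a_disc_ge; have := lyap_a_lead_gt0 a_gt0.
move: (2 - b - c ^+ 2 * b) => A.
have : 0 < 2 - b by ab_range; lra.
move: (2 - b) (r * c) => t B t_gt0 A_gt0.
move: (A * t - B ^+ 2) => K disc_ge L.
have K_gt0 : 0 < K by have := mulr_gt0 (mulr_gt0 a_gt0 t_gt0) A_gt0; lra.
rewrite -(ler_pM2l K_gt0).
have := ler_wpM2l (ltW a_gt0) L; have := ler_wpM2r x1_ge0 disc_ge.
rewrite expr0n /= !mulr0 !mul0r; lra.
Qed.

Definition lyap_disc (v u : R) := qform (c ^+ 2 - 2 * r) (- c) 2 v u.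

Lemma lyap_disc_step : 0 <= (a + b) ^+ 2 - 4 * a ->
  forall v u : R, lyap_disc u (c * u - r * v) <= lyap_disc v u.
Proof.
move=> disc_ge0 v u; ab_range.
pose A := c ^+ 2 - 2 * r - 2 * r ^+ 2; pose B := - (c * b).
pose C := 2 + 2 * r - c ^+ 2.
have -> : lyap_disc u (c * u - r * v) = lyap_disc v u - qform A B C v u.
  by rewrite /lyap_disc /qform /A /B /C; ring.
rewrite lerBlDr lerDl qform_ge0 //.
- have [b_le1|b_gt1] := lerP b 1.
    have -> : A = (a + b) ^+ 2 - 4 * a + 2 * (b * (1 - b)) by rewrite /A; ring.
    by rewrite addr_ge0 // mulr_ge0 // mulr_ge0 // subr_ge0.
  have -> : A = c ^+ 2 + 2 * ((b - 1) * (2 - b)) by rewrite /A; ring.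
  by rewrite addr_ge0 ?sqr_ge0 // mulr_ge0 // mulr_ge0 // subr_ge0; lra.
- have -> : C = (2 - b) * b + a * (4 - 2 * b - a) by rewrite /C; ring.
  by rewrite addr_ge0 // mulr_ge0 // subr_ge0; lra.
- rewrite -subr_ge0.
  have -> : A * C - B ^+ 2 = a * (4 - a - 2 * b) * ((a + b) ^+ 2 - 4 * a).
    by rewrite /A /B /C; ring.
  by rewrite !mulr_ge0 // subr_ge0; lra.
Qed.

(* The invariant supplies the indefinite part:
   ((a + b)^2 - 4 a) v^2 = lyap_disc v u - 2 (u^2 - c u v + r v^2). *)
Lemma sqr_le_disc n : 0 <= (a + b) ^+ 2 - 4 * a ->
  ((a + b) ^+ 2 - 4 * a) * x n ^+ 2 <= 4 * x 1 ^+ 2.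
Proof.
move=> disc_ge0.
have L := lyapunov_le_init xS (lyap_disc_step disc_ge0) n.
have := invariant_le n; rewrite ler_norml => /andP[Q_ge _].
move: L; rewrite /lyap_disc /qform x0 expr0n /= !mulr0 !mul0r; lra.
Qed.

Definition lyap_incr (v u : R) :=
  (b + 2 * r * a) * (a * u ^+ 2 + (u - v) ^+ 2) - 2 * r * a ^+ 2 * u * (u - v).

Lemma lyap_incr_step : b <= 1 ->
  forall v u : R, lyap_incr u (c * u - r * v) <= lyap_incr v u.
Proof.
move=> b_le1 v u; ab_range.
have -> : lyap_incr u (c * u - r * v) = lyap_incr v u
    - (a ^+ 2 * (1 - a) * b * u ^+ 2
       + b * ((1 + r) * b + r * a * (2 + r)) * (u - v) ^+ 2).
  by rewrite /lyap_incr; ring.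
rewrite lerBlDr lerDl addr_ge0 // mulr_ge0 ?sqr_ge0 //.
  by rewrite !mulr_ge0 ?sqr_ge0 // subr_ge0.
by rewrite mulr_ge0 // addr_ge0 // !mulr_ge0 //; lra.
Qed.

Lemma lyap_incr_ge (v u : R) : b <= 1 ->
  (b + r * a) * (u - v) ^+ 2 <= lyap_incr v u.
Proof.
move=> b_le1; ab_range.
have -> : lyap_incr v u = (b + r * a) * (u - v) ^+ 2
    + (r * a ^+ 2 * v ^+ 2 + a * (b + r * a) * u ^+ 2
       + r * a * (1 - a) * (u - v) ^+ 2).
  by rewrite /lyap_incr; ring.
have r_ge0 : 0 <= r by lra.
have ra_ge0 := mulr_ge0 r_ge0 a_ge0.
by rewrite lerDl !addr_ge0 // mulr_ge0 ?sqr_ge0 // !mulr_ge0 ?sqr_ge0 //; lra.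
Qed.

Lemma sqr_incr_le k : b <= 1 -> 0 < a + b -> (x k.+1 - x k) ^+ 2 <= 2 * x 1 ^+ 2.
Proof.
move=> b_le1 ab_gt0; ab_range.
have r_ge0 : 0 <= r by lra.
have K_gt0 : 0 < b + r * a.
  have [b0|b_neq0] := eqVneq b 0; first by rewrite b0 subr0 mul1r add0r; lra.
  have b_gt0 : 0 < b by rewrite lt_def b_neq0.
  by have := mulr_ge0 r_ge0 a_ge0; lra.
rewrite -(ler_pM2l K_gt0).
apply: le_trans (lyap_incr_ge _ _ b_le1) _.
apply: le_trans (lyapunov_le_init xS (lyap_incr_step b_le1) k) _.
rewrite /lyap_incr x0 subr0.
by have := mulr_ge0 (mulr_ge0 b_ge0 (_ : 0 <= 1 - a)) (sqr_ge0 (x 1)); lra.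
Qed.

Lemma sqr_le_quadratic n : b <= 1 -> 0 < a + b ->
  x n ^+ 2 <= n%:R ^+ 2 * (2 * x 1 ^+ 2).
Proof.
move=> b_le1 ab_gt0; elim: n => [|n IHn]; first by rewrite x0 expr0n mul0r.
rewrite -[n.+1%:R]natr1 -[x n.+1](subrKC (x n)).
by apply: sqr_addr_le; rewrite ?ler0n ?(mulr_ge0 _ (sqr_ge0 _)) ?sqr_incr_le.
Qed.

(* Below (a + b)^2 = 8 a the bound on a x_n^2 suffices; above it,
   (a + b)^2 <= 2 ((a + b)^2 - 4 a). *)
Lemma sqr_mulr_sum2_le n : x n ^+ 2 * (a + b) ^+ 2 <= 16 * x 1 ^+ 2.
Proof.
have xn_ge0 := sqr_ge0 (x n).
have [sum2_le|sum2_gt] := lerP ((a + b) ^+ 2) (8 * a).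
  by have := sqr_le_a n; have := ler_wpM2l xn_ge0 sum2_le; lra.
have disc_ge0 : 0 <= (a + b) ^+ 2 - 4 * a by ab_range; lra.
have := sqr_le_disc n disc_ge0.
by have := sqr_ge0 (x 1); have := ler_wpM2l xn_ge0 (ltW sum2_gt); lra.
Qed.

(* If n (a + b) >= 2 the previous bound suffices; otherwise b < 1 as soon as
   n >= 2, and x_n grows at most linearly. *)
Lemma sqr_mulr_sum_le n : (1 <= n)%N ->
  x n ^+ 2 * (a + b) <= 8 * x 1 ^+ 2 * n%:R.
Proof.
move=> n_ge1; ab_range.
have x1_ge0 := sqr_ge0 (x 1); have xn_ge0 := sqr_ge0 (x n).
have n_ge1R : 1 <= n%:R :> R by rewrite ler1n.
have [->|sum_neq0] := eqVneq (a + b) 0.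
  by rewrite mulr0 mulr_ge0 ?ler0n // mulr_ge0.
have sum_gt0 : 0 < a + b by rewrite lt_def sum_neq0; lra.
have [nsum_ge2|nsum_lt2] := lerP 2 (n%:R * (a + b)).
  rewrite -(ler_pM2l sum_gt0).
  have := sqr_mulr_sum2_le n; have := ler_wpM2l x1_ge0 nsum_ge2; lra.
case: n n_ge1 n_ge1R nsum_lt2 xn_ge0 => [|[|n]] // _ n_ge1R nsum_lt2 xn_ge0.
  by rewrite mulr1; have := ler_wpM2l x1_ge0 (_ : a + b <= 2); lra.
have b_le1 : b <= 1.
  have : 2 <= n.+2%:R :> R by rewrite ler_nat.
  by move/(ler_wpM2r (ltW sum_gt0)); lra.
have x1n_ge0 := mulr_ge0 x1_ge0 (ler0n R n.+2).
have := ler_wpM2r (ltW sum_gt0) (sqr_le_quadratic n.+2 b_le1 sum_gt0).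
have := ler_wpM2l x1n_ge0 (ltW nsum_lt2).
lra.
Qed.

End TwoStepRecurrence.

Lemma col_eigen (R : comRingType) (d : nat) (H P : 'M[R]_d) (hv : 'rV[R]_d)
    (i : 'I_d) :
  H *m P = P *m diag_mx hv -> H *m col i P = hv 0 i *: col i P.
Proof.
move=> HP; rewrite {1}colE mulmxA HP -colE mul_mx_diag.
by apply/matrixP => k l; rewrite !mxE mulrC.
Qed.

Section EigenCoordinate.
Variables (R : realFieldType) (d : nat) (H P : 'M[R]_d) (hv : 'rV[R]_d).
Variables (thstar theta0 : 'cV[R]_d) (alpha beta : R) (i : 'I_d).
Hypotheses (H_sym : H^T = H) (HP : H *m P = P *m diag_mx hv).

Let coord (v : 'cV[R]_d) := ((col i P)^T *m v) 0 0.
Let th := theta H thstar alpha beta theta0.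
Local Notation e := (eta_coord H P thstar alpha beta theta0 i).

Lemma coordB u v : coord (u - v) = coord u - coord v.
Proof. by rewrite /coord mulmxBr !mxE. Qed.

Lemma coordZ k v : coord (k *: v) = k * coord v.
Proof. by rewrite /coord -scalemxAr mxE. Qed.

Lemma coordH v : coord (H *m v) = hv 0 i * coord v.
Proof.
rewrite /coord mulmxA -{1}H_sym -trmx_mul (col_eigen i HP) linearZ /=.
by rewrite -scalemxAl mxE.
Qed.

Lemma eta_coordE n : e n = n%:R * (coord (th n) - coord thstar).
Proof. by rewrite /eta_coord /eta -coordB -coordZ. Qed.

Lemma eta_coord0 : e 0 = 0.
Proof. by rewrite eta_coordE mul0r. Qed.

Lemma eta_coordS n :
  e n.+2 = (2 - alpha * hv 0 i - beta * hv 0 i) * e n.+1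
             - (1 - beta * hv 0 i) * e n.
Proof.
rewrite !eta_coordE.
have -> : th n.+2 = theta_step H thstar alpha beta n.+1 (th n.+1) (th n) by [].
rewrite /theta_step !(coordB, coordZ, coordH) -!natr1.
by field; rewrite !natr1 pnatr_eq0.
Qed.

End EigenCoordinate.

(* Orthonormality of P, the ordering of the eigenvalues and the value of
   thstar play no role. *)
Theorem theorem2 (R : realFieldType) (d : nat) (H P : 'M[R]_d) (hv : 'rV[R]_d)
    (q theta0 : 'cV[R]_d) (alpha beta : R) (i : 'I_d) :
  H^T = H ->
  P^T *m P = 1%:M ->
  H *m P = P *m diag_mx hv ->
  (forall j : 'I_d, 0 < hv 0 j) ->
  (forall j k : 'I_d, (j <= k)%N -> hv 0 j <= hv 0 k) ->
  0 <= alpha -> alpha <= 1 / hv 0 i ->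
  0 <= beta -> beta <= 2 / hv 0 i - alpha ->
  forall n : nat, (1 <= n)%N ->
    let thstar := invmx H *m q in
    let e := eta_coord H P thstar alpha beta theta0 i in
    (alpha * hv 0 i != 0 ->
       e n ^+ 2 <= 2 * e 1%N ^+ 2 / (alpha * hv 0 i)) /\
    ((alpha + beta) * hv 0 i != 0 ->
       e n ^+ 2 <= 8 * e 1%N ^+ 2 * n%:R / ((alpha + beta) * hv 0 i)) /\
    ((alpha + beta) ^+ 2 * hv 0 i ^+ 2 != 0 ->
       e n ^+ 2 <= 16 * e 1%N ^+ 2 / ((alpha + beta) ^+ 2 * hv 0 i ^+ 2)).
Proof.
move=> H_sym _ HP hv_gt0 _ alpha_ge0 alpha_le beta_ge0 beta_le n n_ge1 thstar e.
set h := hv 0 i in alpha_le beta_le *; have h_gt0 : 0 < h := hv_gt0 i.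
have a_ge0 : 0 <= alpha * h := mulr_ge0 alpha_ge0 (ltW h_gt0).
have a_le1 : alpha * h <= 1 by rewrite -ler_pdivlMr.
have b_ge0 : 0 <= beta * h := mulr_ge0 beta_ge0 (ltW h_gt0).
have b_le : beta * h <= 2 - alpha * h.
  by move: beta_le; rewrite lerBrDr ler_pdivlMr // mulrDl; lra.
have e0 := eta_coord0 H P thstar theta0 alpha beta i.
have eS := eta_coordS thstar theta0 alpha beta i H_sym HP.
split; [|split] => den_neq0.
- rewrite ler_pdivlMr ?lt_def ?den_neq0 // mulrC.
  exact: (sqr_le_a e0 eS a_ge0 a_le1 b_ge0 b_le).
- rewrite mulrDl in den_neq0 *.
  rewrite ler_pdivlMr ?lt_def ?den_neq0 ?addr_ge0 //.
  exact: (sqr_mulr_sum_le e0 eS a_ge0 a_le1 b_ge0 b_le).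
- rewrite -exprMn mulrDl in den_neq0 *.
  rewrite ler_pdivlMr ?lt_def ?den_neq0 ?sqr_ge0 //.
  exact: (sqr_mulr_sum2_le e0 eS a_ge0 a_le1 b_ge0 b_le).
Qed.
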